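(* Let $n\ge0$ be an integer and $t,x_0,x_1,\dots,x_n$ commuting indeterminates. For nonnegative integers $m_1,\dots,m_n$ put $M_j=m_j+m_{j+1}+\cdots+m_n$ ($M_{n+1}=0$). Then $$\sum_{m_1,\dots,m_n\ge0}\frac{(1+tx_0)^{n-M_1}}{(n-M_1)!}\prod_{j=1}^n\frac{[t(x_j-x_{j-1})]^{m_j}\,(n-j+1-M_{j+1})}{m_j!}=\prod_{i=1}^n(1+tx_i),$$ where $1/(n-M_1)!$ is interpreted as $0$ when $M_1>n$. *)

From HB Require Import structures.
From mathcomp Require Import all_boot all_order all_algebra.
Set Implicit Arguments. Unset Strict Implicit. Unset Printing Implicit Defensive.
Import Order.TTheory GRing.Theory Num.Theory.
Local Open Scope ring_scope.

(* Paper's m_1..m_n are encoded 0-based: m i = m_{i+1} for i : 'I_n.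
   Msuf m k = sum_{i >= k} m i, so that M_{k+1} (paper) = Msuf m k;
   in particular M_1 = Msuf m 0 and M_{j+1} = Msuf m j. *)
Definition Msuf (n : nat) (m : 'I_n -> nat) (k : nat) : nat :=
  (\sum_(i < n | (k <= i)%N) m i)%N.

Definition invfact_or0 (R : fieldType) (n M : nat) : R :=
  if (M <= n)%N then ((n - M)`!)%:R^-1 else 0.

Definition term (R : fieldType) (n : nat) (t : R) (x : nat -> R)
    (m : 'I_n -> nat) : R :=
  invfact_or0 R n (Msuf m 0) * (1 + t * x 0%N) ^+ (n - Msuf m 0)
  * \prod_(i < n)
      ((t * (x i.+1 - x i)) ^+ (m i)
       * ((n - i)%:R - (Msuf m i.+1)%:R)   (* n - j + 1 - M_{j+1}, j = i+1 *)
       / ((m i)`!)%:R).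
Arguments term {R} n t x m.

From HB Require Import structures.
From mathcomp Require Import all_boot all_order all_algebra.
From mathcomp Require Import ring.
Import Order.TTheory GRing.Theory Num.Theory.
Local Open Scope ring_scope.

(* The identity is proved by induction on n, summing out the first index m_1.
   Put y = 1 + t x_0, d = t (x_1 - x_0) and M = M_2.  The factors of a summand
   that involve m_1 = a are
       y^(n-a-M) / (n-a-M)!  *  d^a (n-M) / a!,
   and since (n-M) / ((n-M-a)! a!) = C(n-M, a) / (n-1-M)!, the binomial theorem
   turns their sum over a into (y + d)^(n-M) / (n-1-M)!, where y + d = 1 + t x_1.
   The result is (1 + t x_1) times the summand of the same identity for n - 1
   and the variables x_1, ..., x_n, so the induction hypothesis concludes. *)

Section BinomialStep.
Variable R : fieldType.
Hypothesis charR0 : [pchar R] =i pred0.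

Lemma natr_fact_neq0 (k : nat) : (k`!)%:R != 0 :> R.
Proof. by rewrite ((pcharf0P R).1 charR0) -lt0n fact_gt0. Qed.

Lemma binomial_weight (N a : nat) : (a <= N.+1)%N ->
  ((N.+1 - a)`!)%:R^-1 * ((N.+1)%:R / (a`!)%:R)
  = (N`!)%:R^-1 * ('C(N.+1, a))%:R :> R.
Proof.
move=> le_a_N1.
have nz_a := natr_fact_neq0 a; have nz_Na := natr_fact_neq0 (N.+1 - a).
have nz_N := natr_fact_neq0 N.
have binE : ('C(N.+1, a))%:R * ((a`!)%:R * ((N.+1 - a)`!)%:R)
            = (N.+1)%:R * (N`!)%:R :> R.
  by rewrite -!natrM bin_fact // factS.
rewrite -[(N.+1)%:R](mulfK nz_N) -binE; field.
by rewrite nz_N nz_Na nz_a.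
Qed.

Lemma exp_binomial_sum (N : nat) (y d : R) :
  \sum_(a < N.+2) ((N.+1 - a)`!)%:R^-1 * y ^+ (N.+1 - a)
                  * (d ^+ a * (N.+1)%:R / (a`!)%:R)
  = (N`!)%:R^-1 * (y + d) ^+ N.+1.
Proof.
rewrite exprDn mulr_sumr; apply: eq_bigr => -[a lt_a_N2] _ /=.
have ->: ((N.+1 - a)`!)%:R^-1 * y ^+ (N.+1 - a) * (d ^+ a * (N.+1)%:R / (a`!)%:R)
    = y ^+ (N.+1 - a) * d ^+ a * (((N.+1 - a)`!)%:R^-1 * ((N.+1)%:R / (a`!)%:R)).
  by rewrite !mulrA; ring.
by rewrite binomial_weight // -mulr_natr; ring.
Qed.

(* Summing out the first index: a is m_1, M is M_2 and the range K > n + 1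
   of a contains every a with a nonzero term. *)
Lemma sum_first_index (K n M : nat) (y d : R) : (n.+2 <= K)%N ->
  \sum_(a < K) invfact_or0 R n.+1 (a + M) * y ^+ (n.+1 - (a + M))
               * (d ^+ a * ((n.+1)%:R - M%:R) / (a`!)%:R)
  = (y + d) * (invfact_or0 R n M * (y + d) ^+ (n - M)).
Proof.
move=> le_n2_K; rewrite {2}/invfact_or0.
case: (leqP M n) => [le_M_n | lt_n_M]; last first.
  (* M > n: either M = n + 1 and the weight vanishes, or every term does. *)
  rewrite mul0r mulr0; apply: big1 => a _.
  have [->|ne_M_n1] := eqVneq M n.+1; first by rewrite subrr mulr0 mul0r mulr0.
  rewrite /invfact_or0 ifF ?mul0r //; apply/negbTE; rewrite -ltnNge.
  by apply: leq_trans (leq_addl _ _); rewrite ltn_neqAle eq_sym ne_M_n1.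
have [N def_n] : exists N, n = (N + M)%N by exists (n - M)%N; rewrite subnK.
subst n; rewrite addnK (bigID (fun a : 'I_K => (a < N.+2)%N)) /=.
rewrite [X in _ + X]big1 ?addr0; last first.
  move=> a; rewrite -leqNgt => le_N2_a; rewrite /invfact_or0 ifF ?mul0r //.
  by apply/negbTE; rewrite -ltnNge -addSn ltn_add2r.
rewrite -(big_ord_widen K (fun a => invfact_or0 R (N + M).+1 (a + M)
            * y ^+ ((N + M).+1 - (a + M))
            * (d ^+ a * (((N + M).+1)%:R - M%:R) / (a`!)%:R))); last first.
  by rewrite (leq_trans _ le_n2_K) // !ltnS leq_addr.
rewrite mulrCA -exprS -exp_binomial_sum; apply: eq_bigr => -[a lt_a_N2] _ /=.
have le_aM : (a + M <= (N + M).+1)%N by rewrite -addSn leq_add2r -ltnS.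
by rewrite /invfact_or0 le_aM -addSn subnDr -natrB ?leq_addl // addnK.
Qed.

End BinomialStep.

Definition ffun_cons {T : finType} {n : nat} (a : T) (g : {ffun 'I_n -> T})
  : {ffun 'I_n.+1 -> T} :=
  [ffun i => if unlift ord0 i is Some j then g j else a].

Lemma ffun_cons_head (T : finType) (n : nat) (a : T) (g : {ffun 'I_n -> T}) :
  ffun_cons a g ord0 = a.
Proof. by rewrite ffunE unlift_none. Qed.

Lemma ffun_cons_tail (T : finType) (n : nat) (a : T) (g : {ffun 'I_n -> T})
    (j : 'I_n) :
  ffun_cons a g (lift ord0 j) = g j.
Proof. by rewrite ffunE liftK. Qed.

Lemma sum_ffun_cons (V : nmodType) (T : finType) (n : nat)
    (F : {ffun 'I_n.+1 -> T} -> V) :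
  \sum_(f : {ffun 'I_n.+1 -> T}) F f
  = \sum_(a : T) \sum_(g : {ffun 'I_n -> T}) F (ffun_cons a g).
Proof.
rewrite pair_bigA (reindex (fun p : T * {ffun 'I_n -> T} => ffun_cons p.1 p.2))//.
exists (fun f : {ffun 'I_n.+1 -> T} => (f ord0, [ffun j => f (lift ord0 j)])) => [[a g]|f] _ /=.
  by rewrite ffun_cons_head; congr pair; apply/ffunP => j; rewrite ffunE ffun_cons_tail.
by apply/ffunP => i; rewrite ffunE; case: unliftP => [j ->|->]; rewrite ?ffunE.
Qed.

Section SuffixSums.
Variables (n : nat) (m : 'I_n.+1 -> nat) (g : 'I_n -> nat).
Hypothesis tail_m : forall j, m (lift ord0 j) = g j.

Lemma Msuf_tail (k : nat) : Msuf m k.+1 = Msuf g k.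
Proof.
rewrite /Msuf big_mkcond big_ord_recl /= add0n [RHS]big_mkcond.
by apply: eq_bigr => i _; rewrite tail_m.
Qed.

Lemma Msuf_head : Msuf m 0 = (m ord0 + Msuf g 0)%N.
Proof.
rewrite /Msuf big_mkcond big_ord_recl /= [X in (_ + X)%N = _]big_mkcond.
by congr (_ + _)%N; apply: eq_bigr => i _; rewrite tail_m.
Qed.

Lemma term_cons (R : fieldType) (t : R) (x : nat -> R) :
  term n.+1 t x m
  = invfact_or0 R n.+1 (m ord0 + Msuf g 0)
    * (1 + t * x 0%N) ^+ (n.+1 - (m ord0 + Msuf g 0))
    * ((t * (x 1%N - x 0%N)) ^+ m ord0 * ((n.+1)%:R - (Msuf g 0)%:R)
       / ((m ord0)`!)%:R)
    * \prod_(i < n) ((t * (x i.+2 - x i.+1)) ^+ g i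
                     * ((n - i)%:R - (Msuf g i.+1)%:R) / ((g i)`!)%:R).
Proof.
rewrite /term Msuf_head big_ord_recl /= subn0 Msuf_tail -!mulrA.
do 5 congr (_ * _); apply: eq_bigr => i _.
by rewrite /bump /= add1n subSS Msuf_tail tail_m.
Qed.

End SuffixSums.

Lemma sum_term_bounded (R : fieldType) (charR0 : [pchar R] =i pred0) (n : nat) :
  forall (K : nat) (t : R) (x : nat -> R), (n < K)%N ->
  \sum_(m : {ffun 'I_n -> 'I_K}) term n t x (fun i => nat_of_ord (m i))
  = \prod_(i < n) (1 + t * x i.+1).
Proof.
elim: n => [|n IHn] K t x lt_n_K.
  under eq_bigr => m _ do
    rewrite /term /Msuf !big_ord0 /invfact_or0 /= invr1 !mulr1.
  by rewrite big_ord0 sumr_const card_ffun !card_ord.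
rewrite sum_ffun_cons exchange_big big_ord_recl /= -(IHn K t (fun k => x k.+1));
  last exact: ltn_trans lt_n_K.
rewrite mulr_sumr; apply: eq_bigr => g _.
have tail_cons (a : 'I_K) (j : 'I_n) :
    nat_of_ord (ffun_cons a g (lift ord0 j)) = nat_of_ord (g j).
  by rewrite ffun_cons_tail.
under eq_bigr => a _ do rewrite (@term_cons _ _ _ (tail_cons a)) ffun_cons_head.
rewrite -mulr_suml sum_first_index //.
have -> : 1 + t * x 0%N + t * (x 1%N - x 0%N) = 1 + t * x 1%N by ring.
by rewrite /term !mulrA.
Qed.

Theorem mainTheorem12 (R : fieldType) (charR0 : [pchar R] =i pred0)
    (n : nat) (t : R) (x : nat -> R) :
  \sum_(m : {ffun 'I_n -> 'I_n.+1}) term n t x (fun i => nat_of_ord (m i))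
  = \prod_(i < n) (1 + t * x i.+1).
Proof. exact: sum_term_bounded. Qed.
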